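(* Let $\Xi$ be a standard manageable groupoid with unit space $X$ and main orbit $X_0$. Then the map $(\mathrm r,\mathrm d):\Xi(X_0)\to X_0\times X_0$, $\xi\mapsto(\mathrm r(\xi),\mathrm d(\xi))$, is a homeomorphism.
   Context: Manageable groupoid: Hausdorff locally compact $\sigma$-compact groupoid with compact unit space $X$, étale and amenable. It is standard if there is a closed invariant subset $X_\infty\subset X$ such that $X_0:=X\setminus X_\infty$ is a dense orbit (for the equivalence relation $x\cong y$ iff some $\xi$ has $\mathrm d(\xi)=x$, $\mathrm r(\xi)=y$), the isotropy groups $\Xi^z_z=\{\xi:\mathrm r(\xi)=z=\mathrm d(\xi)\}$ are trivial for $z\in X_0$, and $\Xi(X_0)=\{\xi:\mathrm r(\xi),\mathrm d(\xi)\in X_0\}$ is second countable in the subspace topology. $X_0$ is called the main orbit. *)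

From HB Require Import structures.
From mathcomp Require Import all_boot all_order all_algebra.
From mathcomp Require Import all_classical all_reals topology normedtype esum.
From mathcomp Require Import Rstruct Rstruct_topology.
From Stdlib Require Rdefinitions.
Local Notation R := Rdefinitions.R.
Set Implicit Arguments. Unset Strict Implicit. Unset Printing Implicit Defensive.
Import Order.TTheory GRing.Theory Num.Theory.
Local Open Scope classical_set_scope.
Local Open Scope ring_scope.

(* A (topological) groupoid with arrow space G and unit space X.
   [mul g h] is the product "g h", meaningful when d g = r h;
   [u x] is the unit at x. *)
Record groupoid_data (G X : Type) := GroupoidData {
  gr : G -> X;
  gd : G -> X;
  gmul : G -> G -> G;
  ginv : G -> G;
  gunit : X -> G }.

Definition groupoid_axioms (G X : Type) (Γ : groupoid_data G X) : Prop :=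
  let r := gr Γ in let d := gd Γ in let m := gmul Γ in
  let i := ginv Γ in let u := gunit Γ in
  [/\ forall x, r (u x) = x /\ d (u x) = x,
      forall g h, d g = r h -> r (m g h) = r g /\ d (m g h) = d h,
      forall g h k, d g = r h -> d h = r k -> m (m g h) k = m g (m h k),
      forall g, m (u (r g)) g = g /\ m g (u (d g)) = g &
      forall g, [/\ r (i g) = d g, d (i g) = r g,
                    m g (i g) = u (r g) & m (i g) g = u (d g)] ].

Definition topological_groupoid (G X : topologicalType)
    (Γ : groupoid_data G X) : Prop :=
  [/\ groupoid_axioms Γ,
      continuous (gr Γ) /\ continuous (gd Γ),
      continuous (ginv Γ), continuous (gunit Γ) &
      {within [set p : G * G | gd Γ p.1 = gr Γ p.2],
        continuous (fun p : G * G => gmul Γ p.1 p.2)} ].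

Definition local_homeomorphism (T U : topologicalType) (f : T -> U) : Prop :=
  continuous f /\
  forall t, exists O : set T, [/\ open O, O t, {in O &, injective f} &
     forall V, open V -> V `<=` O -> open (f @` V)].

Definition etale (G X : topologicalType) (Γ : groupoid_data G X) : Prop :=
  local_homeomorphism (gr Γ).

Definition sigma_compact (T : topologicalType) : Prop :=
  exists K : nat -> set T, (forall n, compact (K n)) /\ \bigcup_n K n = [set: T].

Definition compactly_supported (T : topologicalType) (f : T -> R) : Prop :=
  exists K : set T, compact K /\ forall t, ~ K t -> f t = 0.

(* Topological amenability of an etale groupoid (Brown--Ozawa, Def. 5.6.13):
   for every compact K of arrows and eps > 0 there is a nonnegative
   f in C_c(G) with |sum_{xi in G^{r eta}} f xi - 1| < eps and
   sum_{xi in G^{d eta}} |f (eta xi) - f xi| < eps for all eta in K. *)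
Definition amenable_etale (G X : topologicalType) (Γ : groupoid_data G X)
  : Prop :=
  forall (K : set G) (eps : R), compact K -> 0 < eps ->
  exists f : G -> R,
    [/\ continuous f, (forall g, 0 <= f g), compactly_supported f &
        forall eta, K eta ->
          (`| \esum_(xi in [set xi | gr Γ xi = gr Γ eta]) (f xi)%:E - 1%E |
             < eps%:E)%E /\
          (\esum_(xi in [set xi | gr Γ xi = gd Γ eta])
             (`| f (gmul Γ eta xi) - f xi |)%:E < eps%:E)%E ].

Definition manageable (G X : topologicalType) (Γ : groupoid_data G X) : Prop :=
  [/\ topological_groupoid Γ, hausdorff_space G, locally_compact [set: G],
      sigma_compact G /\ compact [set: X] & etale Γ /\ amenable_etale Γ].

Definition orbit_equiv (G X : Type) (Γ : groupoid_data G X) (x y : X) : Prop :=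
  exists xi, gd Γ xi = x /\ gr Γ xi = y.

Definition invariant_set (G X : Type) (Γ : groupoid_data G X) (A : set X) :=
  forall x y, orbit_equiv Γ x y -> A x -> A y.

Definition restr_arrows (G X : Type) (Γ : groupoid_data G X) (A : set X)
  : set G := [set xi | A (gr Γ xi) /\ A (gd Γ xi)].

Definition second_countable_on (T : topologicalType) (S : set T) : Prop :=
  exists B : nat -> set T,
    (forall n, exists U, open U /\ B n = U `&` S) /\
    (forall U, open U -> forall t, U t -> S t ->
       exists n, B n t /\ B n `<=` U `&` S).

Definition standard (G X : topologicalType) (Γ : groupoid_data G X)
  (X0 : set X) : Prop :=
  manageable Γ /\
  [/\ closed (~` X0), invariant_set Γ (~` X0),
      (exists x0, X0 = [set y | orbit_equiv Γ x0 y]) /\ dense X0,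
      (forall z, X0 z -> forall xi, gr Γ xi = z -> gd Γ xi = z ->
         xi = gunit Γ z) &
      second_countable_on (restr_arrows Γ X0)].

Definition homeomorphism_on (T U : topologicalType) (A : set T) (B : set U)
  (f : T -> U) : Prop :=
  [/\ forall t, A t -> B (f t), {in A &, injective f},
      {within A, continuous f} &
      exists g : U -> T,
        [/\ forall s, B s -> A (g s), forall s, B s -> f (g s) = s &
            {within B, continuous g}]].

From mathcomp Require Import all_boot all_classical topology.
Set Implicit Arguments. Unset Strict Implicit. Unset Printing Implicit Defensive.
Local Open Scope classical_set_scope.

(* The map (r, d) : Xi(X0) -> X0 x X0 is always continuous; it is injective
   because the isotropy over the main orbit is trivial, and it has a section
   because X0 is a single orbit.  The substance of the theorem is that this
   section is continuous, which holds because the main orbit is DISCRETE: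
   - since Xi(X0) is second countable and r is locally injective, each basic
     open set contains at most one arrow ending at a fixed base point x0, so
     the orbit X0 of x0 is countable;
   - X0 is open (its complement is closed) in the compact Hausdorff space X,
     so by a Baire category argument it contains an isolated point y0;
   - in an etale groupoid an isolated unit has isolated arrows above it, so
     isolation is transported along arrows, and every point of X0 is isolated. *)

Lemma compact_nested_closures (T : topologicalType) (S : nat -> set T) :
  compact [set: T] -> (forall n, S n !=set0) -> (forall n, S n.+1 `<=` S n) ->
  exists p, forall n, closure (S n) p.
Proof.
move=> cT S0 Sdec.
have Smono n m : (n <= m)%N -> S m `<=` S n.
  move=> /subnK <-; elim: (m - n)%N => [|k IH] //= x.
  by rewrite addSn => /Sdec /IH.
pose F := filter_from [set: nat] S.
have FF : ProperFilter F.
  apply: filter_from_proper; last by move=> i _; exact: S0.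
  apply: filter_from_filter; first by exists 0%N.
  move=> i j _ _; exists (maxn i j) => // x Sx.
  by split; apply: (Smono _ (maxn i j)) Sx; rewrite ?leq_maxl ?leq_maxr.
have [p [_ cp]] := cT F FF filterT.
by exists p => n B nB; apply: (cp (S n) B) => //; exists n.
Qed.

Lemma open_setD1 (T : topologicalType) (V : set T) (a : T) :
  hausdorff_space T -> open V -> open (V `\` [set a]).
Proof.
move=> hT oV; apply: openI => //; apply: closed_openC.
exact/accessible_closed_set1/hausdorff_accessible.
Qed.

Lemma shrink_avoiding (T : topologicalType) (V : set T) (a : T) :
  hausdorff_space T -> compact [set: T] -> open V -> (exists2 q, V q & q <> a) ->
  exists V', [/\ open V', V' !=set0 & closure V' `<=` V `\` [set a]].
Proof.
move=> hT cT oV [q Vq qa].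
have nq : nbhs q (V `\` [set a]).
  by apply: open_nbhs_nbhs; split; [exact: open_setD1 | split].
have [W nW cW] := @compact_regular _ q setT hT cT filterT _ nq.
exists W°; split; [exact: open_interior | by exists q |].
exact: subset_trans (closureS (@interior_subset _ W)) cW.
Qed.

(* Baire category for compact Hausdorff spaces: a nonempty open set covered
   by a sequence of points contains an isolated point.  Otherwise, shrinking
   repeatedly to avoid a 0, a 1, ... yields nested open sets whose closures
   meet in a point of the open set that is none of the a n. *)
Lemma countable_open_isolated (T : topologicalType) (O : set T) (a : nat -> T) :
  hausdorff_space T -> compact [set: T] -> open O -> O !=set0 ->
  O `<=` range a -> exists2 y, O y & open [set y].
Proof.
move=> hT cT oO [o0 Oo0] Oa; apply: contrapT => noiso.
(* A nonempty open subset of O is not a singleton, so it avoids each a n. *)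
have avoid V n : open V -> V !=set0 -> V `<=` O -> exists2 q, V q & q <> a n.
  move=> oV [p Vp] VO; have [pa|] := pselect (p = a n); last by exists p.
  apply: contrapT => Vpt; apply: noiso; exists p; first exact: VO.
  suff -> : [set p] = V by [].
  apply/seteqP; split => [x -> //|x Vx]; rewrite /= pa.
  by apply: contrapT => xa; apply: Vpt; exists x.
pose P V := [/\ open V, V !=set0 & V `<=` O].
have /choice [f Hf] : forall Vn : set T * nat, exists V',
    P Vn.1 -> P V' /\ closure V' `<=` Vn.1 `\` [set a Vn.2].
  move=> [V n]; have [[oV V0 VO]|nP] := pselect (P V); last by exists set0.
  have [V' [oV' V'0 cV']] := shrink_avoiding hT cT oV (avoid V n oV V0 VO).
  by exists V' => _; split => //; split => // x /subset_closure /cV' [/VO].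
pose fix S n := if n is m.+1 then f (S m, m) else O.
have PS n : P (S n).
  by elim: n => [|n IH]; [split => //; exists o0 | exact: (Hf (S n, n) IH).1].
have shrinkS n : closure (S n.+1) `<=` S n `\` [set a n] := (Hf (S n, n) (PS n)).2.
have S0 n : S n !=set0 by case: (PS n).
have [|p Sp] := compact_nested_closures cT S0.
  by move=> n x /subset_closure /shrinkS [].
have /shrinkS [/Oa [n _ pn] _] := Sp 1%N.
by have /shrinkS [_] := Sp n.+1; apply.
Qed.

Lemma within_isolated_continuous (T U : topologicalType) (A : set T)
  (f : T -> U) : (forall t, A t -> open [set t]) -> {within A, continuous f}.
Proof.
move=> isoA; apply/subspace_continuousP => t At W nW.
have nt : nbhs t [set t] by apply: open_nbhs_nbhs; split; [exact: isoA|].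
by apply: filterS nt => _ -> _; exact: nbhs_singleton nW.
Qed.

Lemma open_set1_pair (T U : topologicalType) (y : T) (z : U) :
  open [set y] -> open [set z] -> open [set (y, z)].
Proof.
move=> oy oz; rewrite openE => _ ->.
exists ([set y], [set z]); last by move=> [? ?] /= [-> ->].
by split; apply: open_nbhs_nbhs.
Qed.

Section GroupoidAlgebra.
Variables (G X : Type) (Γ : groupoid_data G X).
Hypothesis ax : groupoid_axioms Γ.

Lemma gr_unit x : gr Γ (gunit Γ x) = x.
Proof. by case: ax => /(_ x) []. Qed.

Lemma gd_unit x : gd Γ (gunit Γ x) = x.
Proof. by case: ax => /(_ x) []. Qed.

Lemma gr_mul g h : gd Γ g = gr Γ h -> gr Γ (gmul Γ g h) = gr Γ g.
Proof. by case: ax => _ /(_ g h) hm _ _ _ /hm []. Qed.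

Lemma gd_mul g h : gd Γ g = gr Γ h -> gd Γ (gmul Γ g h) = gd Γ h.
Proof. by case: ax => _ /(_ g h) hm _ _ _ /hm []. Qed.

Lemma gmulA g h k : gd Γ g = gr Γ h -> gd Γ h = gr Γ k ->
  gmul Γ (gmul Γ g h) k = gmul Γ g (gmul Γ h k).
Proof. by case: ax => _ _ /(_ g h k). Qed.

Lemma gmul_unitl g : gmul Γ (gunit Γ (gr Γ g)) g = g.
Proof. by case: ax => _ _ _ /(_ g) []. Qed.

Lemma gmul_unitr g : gmul Γ g (gunit Γ (gd Γ g)) = g.
Proof. by case: ax => _ _ _ /(_ g) []. Qed.

Lemma gr_inv g : gr Γ (ginv Γ g) = gd Γ g.
Proof. by case: ax => _ _ _ _ /(_ g) []. Qed.

Lemma gd_inv g : gd Γ (ginv Γ g) = gr Γ g.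
Proof. by case: ax => _ _ _ _ /(_ g) []. Qed.

Lemma gmulV g : gmul Γ g (ginv Γ g) = gunit Γ (gr Γ g).
Proof. by case: ax => _ _ _ _ /(_ g) []. Qed.

Lemma gmulVg g : gmul Γ (ginv Γ g) g = gunit Γ (gd Γ g).
Proof. by case: ax => _ _ _ _ /(_ g) []. Qed.

(* Inversion is an involution: g^-1^-1 = g^-1^-1 (g^-1 g) = g. *)
Lemma ginvK g : ginv Γ (ginv Γ g) = g.
Proof.
rewrite -[LHS]gmul_unitr gd_inv gr_inv -gmulVg -gmulA ?gd_inv ?gr_inv //.
by rewrite gmulVg gd_inv gmul_unitl.
Qed.

(* Two arrows with the same range and the same source z coincide when the
   isotropy group at z is trivial, since h^-1 g is then the unit at z. *)
Lemma arrow_eq_of_trivial_isotropy (z : X) (g h : G) :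
  (forall k, gr Γ k = z -> gd Γ k = z -> k = gunit Γ z) ->
  gr Γ g = gr Γ h -> gd Γ g = z -> gd Γ h = z -> g = h.
Proof.
move=> iso rgh dg dh.
have c : gd Γ (ginv Γ h) = gr Γ g by rewrite gd_inv rgh.
have e : gmul Γ (ginv Γ h) g = gunit Γ z.
  by apply: iso; rewrite ?gr_mul ?gd_mul ?gr_inv.
rewrite -[g]gmul_unitl rgh -gmulV gmulA ?gr_inv //.
by rewrite e -dh gmul_unitr.
Qed.

Definition orbit (x : X) : set X := [set y | orbit_equiv Γ x y].

Lemma orbit_refl x : orbit x x.
Proof. by exists (gunit Γ x); rewrite gr_unit gd_unit. Qed.

Lemma orbit_sym x y : orbit x y -> orbit y x.
Proof. by move=> [g [dg rg]]; exists (ginv Γ g); rewrite gr_inv gd_inv. Qed.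

Lemma orbit_trans x y z : orbit x y -> orbit y z -> orbit x z.
Proof.
move=> [g [dg rg]] [h [dh rh]]; have c : gd Γ h = gr Γ g by rewrite dh rg.
by exists (gmul Γ h g); rewrite gr_mul ?gd_mul.
Qed.

Lemma orbit_connected x0 y z : orbit x0 y -> orbit x0 z -> orbit z y.
Proof. by move=> oy oz; apply: orbit_trans (orbit_sym oz) oy. Qed.

Lemma range_source_section (A : set X) :
  (forall y z, A y -> A z -> orbit z y) ->
  exists g : X * X -> G, forall s, (A `*` A) s ->
    [/\ restr_arrows Γ A (g s), gr Γ (g s) = s.1 & gd Γ (g s) = s.2].
Proof.
move=> conn; suff /choice [g Hg] : forall s : X * X, exists ξ, (A `*` A) s ->
    [/\ restr_arrows Γ A ξ, gr Γ ξ = s.1 & gd Γ ξ = s.2] by exists g.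
move=> [y z].
have [[/= Ay Az]|nA] := pselect ((A `*` A) (y, z)); last first.
  by exists (gunit Γ y) => /nA.
have [ξ [dξ rξ]] := conn _ _ Ay Az.
by exists ξ => _; rewrite /restr_arrows /= rξ dξ.
Qed.

End GroupoidAlgebra.

(* A topological groupoid with Hausdorff arrow space has a Hausdorff unit
   space, since u embeds X into G with r o u = id. *)
Lemma hausdorff_units (G X : topologicalType) (Γ : groupoid_data G X) :
  groupoid_axioms Γ -> continuous (gunit Γ) -> hausdorff_space G ->
  hausdorff_space X.
Proof.
move=> ax cu hG p q cpq; rewrite -(gr_unit ax p) -(gr_unit ax q); congr gr.
apply: hG => A B nA nB.
have [x [Ax Bx]] := cpq _ _ (cu p A nA) (cu q B nB).
by exists (gunit Γ x).
Qed.

Section EtaleGroupoid.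
Variables (G X : topologicalType) (Γ : groupoid_data G X).
Hypotheses (ax : groupoid_axioms Γ) (et : etale Γ) (cr : continuous (gr Γ)).

(* Above an isolated unit the arrows are isolated: on a neighbourhood O of
   eta where r is injective, {eta} = O /\ r^-1 {r eta} is open. *)
Lemma etale_isolated_arrow (η : G) : open [set gr Γ η] -> open [set η].
Proof.
move=> oy; have [_ /(_ η) [O [oO Oη injO _]]] := et.
suff <- : O `&` gr Γ @^-1` [set gr Γ η] = [set η].
  by apply: openI => //; move/continuousP: cr; apply.
apply/seteqP; split => [x [Ox rx]|x -> //].
by apply: injO; rewrite ?inE.
Qed.

(* Isolation of points is transported along arrows: if r eta is isolated so
   is eta, hence eta^-1, and r, being open near eta^-1, maps it to d eta. *)
Lemma isolated_along_arrow (η : G) : continuous (ginv Γ) ->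
  open [set gr Γ η] -> open [set gd Γ η].
Proof.
move=> ci /etale_isolated_arrow oη.
have oiη : open [set ginv Γ η].
  suff <- : ginv Γ @^-1` [set η] = [set ginv Γ η].
    by move/continuousP: ci; apply.
  by apply/seteqP; split => x /=; [move<- | move->]; rewrite ginvK.
have [_ /(_ (ginv Γ η)) [O [_ Oiη _ openr]]] := et.
have := openr _ oiη (fun x e => ltac:(rewrite e; exact: Oiη)).
by rewrite image_set1 gr_inv.
Qed.

(* The orbit of x0 is countable when Xi(orbit x0) is second countable: from
   each basic open set pick an arrow ending at x0, if any; by local
   injectivity of r, every arrow y -> x0 is picked by a basic set inside its
   injectivity neighbourhood, so y is the source of a picked arrow. *)
Lemma countable_orbit (x0 : X) :
  second_countable_on (restr_arrows Γ (orbit Γ x0)) ->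
  exists a : nat -> X, orbit Γ x0 `<=` range a.
Proof.
move=> [B [_ basis]]; pose X0 := orbit Γ x0.
pose P n ξ := [/\ B n ξ, restr_arrows Γ X0 ξ & gr Γ ξ = x0].
have /choice [pick Hpick] : forall n, exists ξ, (exists η, P n η) -> P n ξ.
  move=> n; have [[η Pη]|nP] := pselect (exists η, P n η); first by exists η.
  by exists (gunit Γ x0) => /nP.
exists (fun n => gd Γ (pick n)) => y X0y.
have [η [dη rη]] := orbit_connected ax (orbit_refl ax x0) X0y.
have Xη : restr_arrows Γ X0 η by split; rewrite ?rη ?dη //; apply: orbit_refl.
have [_ /(_ η) [O [oO Oη injO _]]] := et.
have [n [Bnη BnO]] := basis O oO _ Oη Xη.
have [Bpick _ rpick] := Hpick n (ex_intro _ η (And3 Bnη Xη rη)).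
exists n => //; rewrite -dη; congr (gd Γ _); apply: injO; rewrite ?inE ?rpick ?rη //.
by have [] := BnO _ Bpick.
Qed.

End EtaleGroupoid.

(* The main orbit of a standard groupoid is discrete: it is countable and
   open in the compact Hausdorff space X, so it has an isolated point, and
   isolation spreads along arrows to the whole orbit. *)
Lemma main_orbit_discrete (G X : topologicalType) (Γ : groupoid_data G X)
  (X0 : set X) : standard Γ X0 -> forall z, X0 z -> open [set z].
Proof.
move=> [[[ax [cr _] ci cu _] hG _ [_ cX] [et _]] [cC _ [[x0 eX0] _] _ sc]].
subst X0 => z X0z.
have hX := hausdorff_units ax cu hG.
have oX0 : open (orbit Γ x0) by rewrite -[orbit _ _]setCK; exact: closed_openC.
have [a Xa] := countable_orbit ax et sc.
have [y X0y oy] := countable_open_isolated hX cX oX0 (ex_intro _ _ X0z) Xa.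
have [η [dη rη]] := orbit_connected ax X0y X0z.
by rewrite -dη; apply: isolated_along_arrow; rewrite ?rη.
Qed.

Theorem lemma7p2 (G X : topologicalType) (Γ : groupoid_data G X) (X0 : set X) :
  standard Γ X0 ->
  homeomorphism_on (restr_arrows Γ X0) (X0 `*` X0)
    (fun xi => (gr Γ xi, gd Γ xi)).
Proof.
move=> std; have disc := main_orbit_discrete std.
move: std => [[[ax [cr cd] _ _ _] _ _ _ _] [_ _ [[x0 eX0] _] iso _]].
have conn y z : X0 y -> X0 z -> orbit Γ z y.
  by rewrite eX0; exact: orbit_connected.
have [g Hg] := range_source_section conn.
split.
- by move=> ξ [].
- move=> ξ η /[!inE] -[_ X0dξ] [_ X0dη] [rξη dξη].
  exact: (arrow_eq_of_trivial_isotropy ax (iso _ X0dη)).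
- apply: continuous_subspaceT => ξ.
  by apply: cvg_pair; [exact: cr | exact: cd].
- exists g; split; [by move=> s /Hg [] | |].
  + by move=> [y z] /Hg [_ /= -> ->].
  + apply: within_isolated_continuous => -[y z] [/= X0y X0z].
    exact: open_set1_pair (disc y X0y) (disc z X0z).
Qed.
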